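(* Consider a discrete-time random walk $(X_n)_{n\ge0}$ on $\mathbb{Z}$ with $X_0=0$ almost surely and i.i.d. increments, $\mathbb{P}(X_{n+1}-X_n=i)=p_i$, where there is a fixed positive integer $l$ with $p_i=0$ for $|i|>l$. Suppose the walk has positive bias, $\sum_{i=-l}^{l}ip_i>0$. Let $\gamma\in(0,1)$ be a solution of $$f(\gamma):=\sum_{i=1}^{l}\Big(\sum_{j=1}^{i}\gamma^j\Big)p_i-\sum_{i=1}^{l}\Big(\sum_{j=1}^{i}\gamma^{-j}\Big)p_{-i}=0$$ (such a solution exists). Then for every integer $\xi>0$, $$\mathbb{P}(\exists n\ \text{s.t.}\ X_n\le-\xi)\le\frac{1}{\gamma^{-\xi-1}-\gamma^{-1}+1}.$$ *)

From HB Require Import structures.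
From mathcomp Require Import all_boot all_order all_algebra.
From mathcomp Require Import all_classical all_reals all_analysis.
Set Implicit Arguments. Unset Strict Implicit. Unset Printing Implicit Defensive.
Import Order.TTheory GRing.Theory Num.Theory.
Local Open Scope classical_set_scope.
Local Open Scope ring_scope.

Definition step_distribution (R : realType) (l : nat) (p : int -> R) : Prop :=
  (forall i, 0 <= p i) /\
  (forall i : int, (l%:Z < `|i|)%R -> p i = 0) /\
  \sum_(i < (l + l).+1) p (i%:Z - l%:Z) = 1.

(* (X_n) is a random walk on Z under P, started at 0 a.s., with i.i.d.
   increments of law p: for every n, the joint law of the first n
   increments (X_1 - X_0, ..., X_n - X_{n-1}) is the product law p^{(x) n}. *)
Definition iid_walk (d : measure_display) (T : measurableType d)
  (R : realType) (P : probability T R) (X : nat -> T -> int) (p : int -> R)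
  : Prop :=
  (forall n (k : int), measurable [set w | X n w = k]) /\
  P [set w | X 0%N w != 0] = 0%E /\
  (forall (n : nat) (k : nat -> int),
     P [set w | forall i, (i < n)%N -> X i.+1 w - X i w = k i] =
     (\prod_(i < n) p (k i))%:E).

Definition drift (R : realType) (l : nat) (p : int -> R) : R :=
  \sum_(i < (l + l).+1) (i%:Z - l%:Z)%:~R * p (i%:Z - l%:Z).

Definition fgamma (R : realType) (l : nat) (p : int -> R) (g : R) : R :=
  \sum_(1 <= i < l.+1) (\sum_(1 <= j < i.+1) g ^+ j) * p (i%:Z)
  - \sum_(1 <= i < l.+1) (\sum_(1 <= j < i.+1) g ^- j) * p (- (i%:Z)).

From HB Require Import structures.
From mathcomp Require Import all_boot all_order all_algebra.
From mathcomp Require Import all_classical all_reals all_analysis.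
From mathcomp Require Import ring lra zify.
Import Order.TTheory GRing.Theory Num.Theory.
Local Open Scope classical_set_scope.
Local Open Scope ring_scope.
Set Implicit Arguments. Unset Strict Implicit. Unset Printing Implicit Defensive.

(* With g = gamma, the potential W(y) = g^(y+1) for y >= 0 and
   W(y) = g^y - 1 + g for y < 0 is positive and decreasing, and
   W(y + s) - W(y) <= g^y (W(s) - g).  Since W(0) = g, the equation f(g) = 0
   says that a step from 0 leaves the expected potential unchanged, so W is
   superharmonic for the walk.  Optional stopping at the first visit to
   (-oo, -xi], truncated at a horizon N, bounds the probability of that visit
   by W(0) / W(-xi) = g / (g^-xi - 1 + g); letting N grow gives the claim.
   The finite-horizon estimate is obtained by summing over the step sequences
   of length N, which needs nothing beyond the law of the first N increments. *)

Lemma min1_le_shift (R : realDomainType) (a b : R) : 0 <= a ->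
  Num.min 1 a <= Num.min 1 (a * b) + a * (1 - Num.min 1 b).
Proof.
move=> a0; have [b1|b1] := leP 1 b; have [ab1|ab1] := leP 1 (a * b).
- by rewrite subrr mulr0 addr0 ge_min lexx.
- by rewrite subrr mulr0 addr0 ge_min ler_peMr ?orbT.
- by rewrite ge_min lerDl mulr_ge0 // subr_ge0 ltW.
- by rewrite mulrBr mulr1 addrC subrK ge_min lexx orbT.
Qed.

Section potential.
Variables (R : realType) (g : R).

Lemma ler_wiXz2l : 0 < g -> g < 1 -> {homo exprz g : y z /~ y <= z}.
Proof.
move=> g0 g1 y z zy; have inv_exp n : g ^ n = g^-1 ^ (- n) by rewrite exprz_inv opprK.
by rewrite (inv_exp y) (inv_exp z) ler_weXz2l ?lerN2 // invf_ge1 // ltW.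
Qed.

Definition potential (y : int) : R := g ^ y - (1 - g) * Num.min 1 (g ^ y).

Lemma potentialE_ge0 y : 0 < g -> g < 1 -> 0 <= y -> potential y = g ^ (y + 1).
Proof.
move=> g0 g1 y0; have gy1 : g ^ y <= 1 by rewrite -(expr0z g) ler_wiXz2l.
by rewrite /potential (min_r gy1) exprzDr ?unitfE ?gt_eqF // expr1z; ring.
Qed.

Lemma potentialE_lt0 y : 0 < g -> g < 1 -> y < 0 -> potential y = g ^ y - 1 + g.
Proof.
move=> g0 g1 y0; have gy1 : 1 <= g ^ y by rewrite -(expr0z g) ler_wiXz2l // ltW.
by rewrite /potential (min_l gy1); ring.
Qed.

Lemma potential_gt0 y : 0 < g -> 0 < potential y.
Proof.
move=> g0; rewrite /potential; move: (g ^ y) (exprz_gt0 y g0) => a a0.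
have ga0 : 0 < g * a by exact: mulr_gt0.
by rewrite minEle; case: ifPn => [a1|_]; lra.
Qed.

Lemma potential_antitone : 0 < g -> g < 1 -> {homo potential : y z /~ y <= z}.
Proof.
move=> g0 g1 y z /(ler_wiXz2l g0 g1); rewrite /potential.
move: (g ^ y) (g ^ z) => a b ba; rewrite !minEle.
by case: ifPn => b1; case: ifPn => a1; nra.
Qed.

Lemma potential_shift y s : 0 < g -> g <= 1 ->
  potential (y + s) - potential y <= g ^ y * (potential s - g).
Proof.
move=> g0 g1; rewrite /potential exprzDr ?unitfE ?gt_eqF //.
have := min1_le_shift (g ^ s) (exprz_ge0 y (ltW g0)).
move: (g ^ y) (g ^ s) => a b h.
have : 0 <= (1 - g) * (Num.min 1 (a * b) + a * (1 - Num.min 1 b) - Num.min 1 a).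
  by apply: mulr_ge0; lra.
nra.
Qed.

End potential.

Definition step_range (l : nat) : seq int :=
  [seq i%:Z - l%:Z | i <- index_iota 0 (l + l).+1].

Lemma sum_step_range (V : nmodType) l (F : int -> V) :
  \sum_(a <- step_range l) F a = \sum_(i < (l + l).+1) F (i%:Z - l%:Z).
Proof. by rewrite big_map big_mkord. Qed.

Lemma sum_step_range_split (V : nmodType) l (F : int -> V) :
  \sum_(a <- step_range l) F a =
  \sum_(1 <= i < l.+1) F (- i%:Z) + F 0 + \sum_(1 <= i < l.+1) F i%:Z.
Proof.
rewrite big_map (@big_cat_nat _ _ _ l) //; last by lia.
rewrite (@big_cat_nat _ _ _ l.+1 l) // ?big_nat1 ?subrr /= ?addrA; last by lia.
congr (_ + _ + _).
- rewrite big_nat_rev big_add1 /=; apply: eq_big_nat => i /andP[_ hi].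
  congr F; lia.
- rewrite (big_addn 1 (l + l).+1 l) (_ : ((l + l).+1 - l = l.+1)%N); last by lia.
  by apply: eq_big_nat => i _; congr F; lia.
Qed.

Lemma geom_sum1 (R : comPzRingType) (x : R) i :
  (1 - x) * \sum_(1 <= j < i.+1) x ^+ j = x - x ^+ i.+1.
Proof.
elim: i => [|i IH]; first by rewrite big_nil mulr0 expr1 subrr.
by rewrite big_nat_recr //= mulrDr IH !exprS; ring.
Qed.

Lemma geom_sum1V (R : fieldType) (x : R) i : x != 0 ->
  (1 - x) * \sum_(1 <= j < i.+1) x ^- j = x ^- i - 1.
Proof.
move=> x0; under eq_bigr do rewrite -exprVn.
rewrite (_ : 1 - x = - x * (1 - x^-1)); last by field.
by rewrite -mulrA geom_sum1 !exprVn exprSr invfM; field; rewrite expf_neq0 x0.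
Qed.

Section potential_walk.
Variables (R : realType) (l : nat) (p : int -> R) (g : R).

(* Since [potential g 0 = g], this is where [fgamma l p g = 0] enters. *)
Lemma potential_drift0 : 0 < g -> g < 1 -> fgamma l p g = 0 ->
  \sum_(a <- step_range l) p a * (potential g a - g) = 0.
Proof.
move=> g0 g1; rewrite /fgamma => /eqP; rewrite subr_eq0 => /eqP f0.
have gn0 : g != 0 by rewrite gt_eqF.
rewrite sum_step_range_split potentialE_ge0 // add0r expr1z subrr mulr0 addr0.
have pos : \sum_(1 <= i < l.+1) p i%:Z * (potential g i%:Z - g) =
    - ((1 - g) * \sum_(1 <= i < l.+1) (\sum_(1 <= j < i.+1) g ^+ j) * p i%:Z).
  rewrite mulr_sumr -sumrN; apply: eq_bigr => i _.
  by rewrite mulrA geom_sum1 potentialE_ge0 // -PoszD addn1 -exprnP; ring.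
have neg : \sum_(1 <= i < l.+1) p (- i%:Z) * (potential g (- i%:Z) - g) =
    (1 - g) * \sum_(1 <= i < l.+1) (\sum_(1 <= j < i.+1) g ^- j) * p (- i%:Z).
  rewrite mulr_sumr; apply: eq_big_nat => i /andP[i0 _].
  by rewrite mulrA geom_sum1V // potentialE_lt0 ?oppr_lt0 ?ltz_nat // -exprnN; ring.
by rewrite pos neg f0; ring.
Qed.

Lemma potential_superharmonic y : 0 < g -> g < 1 -> fgamma l p g = 0 ->
  (forall i, 0 <= p i) -> \sum_(a <- step_range l) p a = 1 ->
  \sum_(a <- step_range l) p a * potential g (y + a) <= potential g y.
Proof.
move=> g0 g1 f0 p0 p1.
have increments_le0 :
    \sum_(a <- step_range l) p a * (potential g (y + a) - potential g y) <= 0.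
  apply: (@le_trans _ _ (g ^ y * \sum_(a <- step_range l) p a * (potential g a - g))).
    rewrite mulr_sumr; apply: ler_sum => a _.
    by rewrite mulrCA ler_wpM2l // potential_shift // ltW.
  by rewrite potential_drift0 // mulr0.
rewrite -subr_le0 -[potential g y]mul1r -p1 mulr_suml -sumrB.
by under eq_bigr do rewrite -mulrBr.
Qed.

End potential_walk.

Section step_sequences.
Variables (l xi : nat).

Fixpoint step_seqs (N : nat) : seq (seq int) :=
  if N is N'.+1 then [seq a :: s | a <- step_range l, s <- step_seqs N'] else [:: [::]].

Fixpoint hits (y : int) (s : seq int) : bool :=
  (y <= - xi%:Z) || (if s is a :: s' then hits (y + a) s' else false).

Lemma size_step_seqs N s : s \in step_seqs N -> size s = N.
Proof.
elim: N s => [|N IH] s; first by rewrite inE => /eqP ->.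
by move=> /allpairsP [[a t] [/= _ /IH <- ->]].
Qed.

Lemma step_range_uniq : uniq (step_range l).
Proof. by rewrite map_inj_uniq ?iota_uniq // => i j /addIr /eqP; rewrite eqz_nat => /eqP. Qed.

Lemma step_seqs_uniq N : uniq (step_seqs N).
Proof.
elim: N => [|N IH] //; rewrite allpairs_uniq ?step_range_uniq //.
by move=> [a s] [b t] _ _ /= [-> ->].
Qed.

Lemma nohits_walk (X : nat -> int) s : ~~ hits (X 0%N) s ->
  (forall i, (i < size s)%N -> X i.+1 - X i = nth 0 s i) ->
  forall n, (n <= size s)%N -> - xi%:Z < X n.
Proof.
elim: s X => [|a s IH] X /=.
  by rewrite orbF => X0 _ n; rewrite leqn0 ltNge => /eqP ->.
rewrite negb_or => /andP[X0 nohit] dX [|n] n_le; first by rewrite ltNge.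
apply: (IH (X \o succn)) => // [|i i_lt]; last exact: (dX i.+1).
by rewrite /= -(subrK (X 0%N) (X 1%N)) dX // addrC.
Qed.

Variables (R : realType) (p : int -> R).

Definition survival (N : nat) (y : int) : R :=
  \sum_(s <- step_seqs N) (~~ hits y s)%:R * \prod_(a <- s) p a.

Lemma survivalS N y : survival N.+1 y =
  (~~ (y <= - xi%:Z))%:R * \sum_(a <- step_range l) p a * survival N (y + a).
Proof.
rewrite /survival big_allpairs_dep mulr_sumr; apply: eq_bigr => a _.
rewrite mulr_sumr mulr_sumr; apply: eq_bigr => s _; rewrite big_cons /=.
by case: (y <= - xi%:Z) => /=; ring.
Qed.

(* Optional stopping: [1 - potential g y / potential g (- xi)] is a
   subsolution of the recursion [survivalS]. *)
Lemma survival_lower_bound (g : R) N y : 0 < g -> g < 1 -> fgamma l p g = 0 ->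
  (forall i, 0 <= p i) -> \sum_(a <- step_range l) p a = 1 ->
  1 - potential g y / potential g (- xi%:Z) <= survival N y.
Proof.
move=> g0 g1 f0 p0 p1; have Wxi_gt0 := potential_gt0 (- xi%:Z) g0.
have hit y' : y' <= - xi%:Z -> 1 - potential g y' / potential g (- xi%:Z) <= 0.
  by move=> y'_le; rewrite subr_le0 ler_pdivlMr // mul1r potential_antitone.
elim: N y => [|N IH] y.
  rewrite /survival big_seq1 big_nil mulr1 /= orbF.
  case: (boolP (y <= - xi%:Z)) => [/hit //|_] /=.
  by rewrite gerBl divr_ge0 // ltW // potential_gt0.
rewrite survivalS; case: (boolP (y <= - xi%:Z)) => [/hit|_] /=; first by rewrite mul0r.
rewrite mul1r; apply: (@le_trans _ _ (\sum_(a <- step_range l)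
    p a * (1 - potential g (y + a) / potential g (- xi%:Z)))); last first.
  by apply: ler_sum => a _; apply: ler_wpM2l.
under eq_bigr do rewrite mulrBr mulr1 mulrA.
rewrite sumrB p1 -mulr_suml lerD2l lerN2 ler_pM2r ?invr_gt0 //.
exact: potential_superharmonic.
Qed.

End step_sequences.

Lemma measure_big_setU_seq d (T : measurableType d) (R : realType)
    (mu : {measure set T -> \bar R}) (I : choiceType) (r : seq I) (F : I -> set T) :
  uniq r -> (forall i, measurable (F i)) ->
  {in r &, forall i j, i != j -> F i `&` F j = set0} ->
  mu (\big[setU/set0]_(i <- r) F i) = (\sum_(i <- r) mu (F i))%E.
Proof.
elim: r => [|i r IH] /=; first by rewrite !big_nil measure0.
move=> /andP[i_r r_uniq] mF disjF; rewrite !big_cons measureU //.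
- congr (_ + _)%E; apply: IH => // j k jr kr.
  by apply: disjF; rewrite inE ?jr ?kr orbT.
- by apply: bigsetU_measurable => j _.
rewrite -bigcup_seq; apply/seteqP; split => // w [Fiw [j /= jr Fjw]].
have ij : i != j by apply: contraNneq i_r => ->.
have := disjF i j; rewrite !inE eqxx jr orbT => /(_ isT isT ij) Fij.
by have : (F i `&` F j) w by []; rewrite Fij.
Qed.

Section walk_events.
Variables (d : measure_display) (T : measurableType d) (X : nat -> T -> int).
Hypothesis mX : forall n (k : int), measurable [set w | X n w = k].

Lemma measurable_walk_rel m n (Q : int -> int -> Prop) :
  measurable [set w | Q (X m w) (X n w)].
Proof.
have -> : [set w | Q (X m w) (X n w)] = \bigcup_(ab : int * int)
    ([set w | X m w = ab.1] `&` [set w | X n w = ab.2] `&` [set _ | Q ab.1 ab.2]).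
  apply/seteqP; split => [w q|w [[a b] _ [[/= -> ->]]]] //.
  by exists (X m w, X n w).
apply: countable_bigcupT_measurable => [|[a b]]; first exact: countableP.
apply: measurableI; first exact: measurableI.
have [q|nq] := pselect (Q a b);
  [apply: (eq_ind _ _ measurableT) | apply: (eq_ind _ _ measurable0)];
  by apply/seteqP; split => w /=.
Qed.

Definition incr_cylinder (N : nat) (s : seq int) : set T :=
  [set w | forall i, (i < N)%N -> X i.+1 w - X i w = nth 0 s i].

Lemma measurable_incr_cylinder N s : measurable (incr_cylinder N s).
Proof.
apply: (@bigcap_measurableType _ _ (fun i => [set w | X i.+1 w - X i w = nth 0 s i])
  [set i | (i < N)%N]) => i _.
exact: (measurable_walk_rel i i.+1 (fun a b => b - a = nth 0 s i)).
Qed.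

Lemma incr_cylinder_disj l N s t : s \in step_seqs l N -> t \in step_seqs l N ->
  s != t -> incr_cylinder N s `&` incr_cylinder N t = set0.
Proof.
move=> sN tN; apply: contraNeq => /set0P[w [ws wt]].
apply/eqP/(@eq_from_nth _ 0); first by rewrite !(size_step_seqs sN) (size_step_seqs tN).
by move=> i; rewrite (size_step_seqs sN) => iN; rewrite -(ws i iN) -(wt i iN).
Qed.

End walk_events.

Section finite_horizon.
Variables (d : measure_display) (T : measurableType d) (R : realType).
Variables (P : probability T R) (X : nat -> T -> int) (l : nat) (p : int -> R).
Variables (xi N : nat).

Definition hitting_event : set T := [set w | exists2 n, (n <= N)%N & X n w <= - xi%:Z].

Definition surviving_paths : set T :=
  \big[setU/set0]_(s <- step_seqs l N | ~~ hits xi 0 s) incr_cylinder X N s.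

Lemma prob_surviving_paths : iid_walk P X p ->
  P surviving_paths = (survival l xi p N 0)%:E.
Proof.
move=> [mX [_ Pcyl]]; rewrite /surviving_paths -big_filter.
rewrite measure_big_setU_seq ?filter_uniq ?step_seqs_uniq //; last 2 first.
- exact: measurable_incr_cylinder.
- move=> s t; rewrite !mem_filter => /andP[_ sN] /andP[_ tN].
  exact: (incr_cylinder_disj X sN tN).
rewrite big_filter big_mkcond /= /survival -sumEFin.
apply: eq_big_seq => s sN; case: ifPn => _; rewrite ?mul0r // mul1r.
by rewrite (big_nth 0) (size_step_seqs sN) big_mkord; apply: Pcyl.
Qed.

Lemma hitting_event_sub :
  hitting_event `<=` ~` surviving_paths `|` [set w | X 0%N w != 0].
Proof.
move=> w [n nN Xn]; have [X0|] := eqVneq (X 0%N w) 0; last by right.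
left; rewrite /surviving_paths -big_filter -bigcup_seq => -[s /=].
rewrite mem_filter => /andP[nohit sN] ws.
have := @nohits_walk xi (X ^~ w) s; rewrite X0 (size_step_seqs sN).
by move=> /(_ nohit ws n nN); rewrite ltNge Xn.
Qed.

Lemma measurable_hitting_event :
  (forall n (k : int), measurable [set w | X n w = k]) -> measurable hitting_event.
Proof.
move=> mX; apply: bigcup_measurable => n _.
exact: (measurable_walk_rel mX n n (fun a _ => a <= - xi%:Z)).
Qed.

Lemma prob_hitting_event_le (g : R) : step_distribution l p -> iid_walk P X p ->
  0 < g -> g < 1 -> fgamma l p g = 0 ->
  (P hitting_event <= (g / potential g (- xi%:Z))%:E)%E.
Proof.
move=> [p0 [_ p1]] walk g0 g1 f0; have [mX [PX0 _]] := walk.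
have mS : measurable surviving_paths.
  by apply: bigsetU_measurable => s _; apply: measurable_incr_cylinder.
have mX0 : measurable [set w | X 0%N w != 0].
  exact: (measurable_walk_rel mX 0 0 (fun a _ => a != 0)).
apply: (le_trans (le_measure _ _ _ hitting_event_sub)); rewrite ?inE.
- exact: measurable_hitting_event.
- exact/measurableU/mX0/measurableC.
apply: (le_trans (measureU2 _ _ _)) => //; first exact: measurableC.
rewrite [X in (_ + X)%E](_ : _ = 0%E) // adde0.
rewrite [X in (X <= _)%E](_ : _ = 1 - P surviving_paths)%E; last exact: probability_setC.
rewrite prob_surviving_paths // -EFinB lee_fin.
rewrite lerBlDr -lerBlDl.
have := survival_lower_bound xi N 0 g0 g1 f0 p0 (etrans (sum_step_range _ _) p1).
by rewrite potentialE_ge0 // add0r expr1z.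
Qed.

End finite_horizon.

Lemma potential_ratioE (R : realType) (g : R) (xi : nat) : 0 < g -> g < 1 -> (0 < xi)%N ->
  g / potential g (- xi%:Z) = 1 / (g ^- xi.+1 - g^-1 + 1).
Proof.
move=> g0 g1 xi0; have gn0 : g != 0 by rewrite gt_eqF.
rewrite potentialE_lt0 ?oppr_lt0 ?ltz_nat // -exprnN.
rewrite (_ : g ^- xi.+1 - g^-1 + 1 = (g ^- xi - 1 + g) / g) ?div1r ?invf_div //.
by rewrite exprSr invfM; field; rewrite gn0 expf_neq0.
Qed.

Theorem mainTheorem8 (d : measure_display) (T : measurableType d)
  (R : realType) (P : probability T R) (X : nat -> T -> int)
  (l : nat) (p : int -> R) (gamma : R) (xi : nat) :
  (0 < l)%N ->
  step_distribution l p ->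
  iid_walk P X p ->
  0 < drift l p ->
  0 < gamma < 1 ->
  fgamma l p gamma = 0 ->
  (0 < xi)%N ->
  (P [set w | exists n, (X n w <= - (xi%:Z))%R] <=
     (1 / (gamma ^- xi.+1 - gamma^-1 + 1))%:E)%E.
Proof.
(* The drift hypothesis only serves to make a root [gamma] exist. *)
move=> _ step walk _ /andP[g0 g1] f0 xi0; rewrite -potential_ratioE //.
have -> : [set w | exists n, X n w <= - xi%:Z] = \bigcup_N hitting_event X xi N.
  apply/seteqP; split => [w [n Xn]|w [N _ [n _ Xn]]]; last by exists n.
  by exists n => //; exists n.
have hit_meas N : measurable (hitting_event X xi N).
  exact: measurable_hitting_event walk.1.
have hit_mono : nondecreasing_seq (hitting_event X xi).
  by move=> m n mn; apply/subsetPset => w [k km Xk]; exists k => //; apply: leq_trans mn.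
apply: (cvge_to_le (nondecreasing_cvg_mu hit_meas (bigcupT_measurable _ hit_meas) hit_mono)).
by apply: nearW => N; exact: (prob_hitting_event_le xi N step walk g0 g1 f0).
Qed.
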